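(* Let $A$ be a reduced commutative ring with finitely many minimal prime ideals, and let $A\subseteq B$ be an extension of rings which preserves non-zero-divisors, i.e. every non-zero-divisor of $A$ is a non-zero-divisor of $B$. Then there is an exact sequence of abelian groups $$0\longrightarrow \mathfrak{C}(A,B)\longrightarrow \mathfrak{C}(A)\longrightarrow \mathfrak{C}(B),$$ in which the map $\mathfrak{C}(A)\to\mathfrak{C}(B)$ is the one induced by the ring map $T(A)\to T(B)$, $a/s\mapsto a/s$ (via $L\mapsto$ the $B$-submodule of $T(B)$ generated by the image of $L$).
   Context: All rings are commutative with identity. For an extension of rings $R\subseteq S$ and $R$-submodules $L,L'$ of $S$, $LL'$ is the $R$-submodule of finite sums $\sum x_ky_k$, $x_k\in L$, $y_k\in L'$. An $R$-submodule $L$ of $S$ is an invertible ideal of $R\subseteq S$ if $LL'=R$ for some $R$-submodule $L'$ of $S$; these form an abelian group $\mathscr{G}(R,S)$ under multiplication and $\mathfrak{C}(R,S)=\mathscr{G}(R,S)/\{Rx: x\in S^\ast\}$. $T(R)$ denotes the total ring of fractions of $R$ (localization at the set of non-zero-divisors), and $\mathfrak{C}(R)=\mathfrak{C}(R,T(R))$. *)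

(* Rings: comPzRingType (commutative with 1; zero ring allowed). *)
From HB Require Import structures.
From mathcomp Require Import all_boot all_order all_algebra.
Set Implicit Arguments. Unset Strict Implicit. Unset Printing Implicit Defensive.
Import Order.TTheory GRing.Theory.
Local Open Scope ring_scope.

Definition seteq (T : Type) (X Y : T -> Prop) := forall x, X x <-> Y x.

Section RingNotions.
Variable R : comPzRingType.

Definition nzd (x : R) := forall y : R, x * y = 0 -> y = 0.
Definition is_unit (x : R) := exists y : R, x * y = 1.
Definition reduced := forall (x : R) (n : nat), x ^+ n = 0 -> x = 0.

Definition ideal (P : R -> Prop) :=
  [/\ P 0, (forall x y, P x -> P y -> P (x + y)) & (forall r x, P x -> P (r * x))].
Definition prime_ideal (P : R -> Prop) :=
  [/\ ideal P, ~ P 1 & (forall x y, P (x * y) -> P x \/ P y)].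
Definition minimal_prime (P : R -> Prop) :=
  prime_ideal P /\
  (forall Q, prime_ideal Q -> (forall x, Q x -> P x) -> forall x, P x -> Q x).
Definition fin_min_primes :=
  exists (n : nat) (f : nat -> R -> Prop),
    forall P, minimal_prime P -> exists2 k, (k < n)%N & seteq P (f k).
End RingNotions.

Section Extensions.
(* An extension R ⊆ S is given by an injective ring morphism j : R -> S;
   R acts on S through j. *)
Variables (R S : comPzRingType) (j : R -> S).

Definition submod (L : S -> Prop) :=
  [/\ L 0, (forall x y, L x -> L y -> L (x + y)) & (forall r x, L x -> L (j r * x))].

Definition prodm (X Y : S -> Prop) : S -> Prop :=
  fun z => exists (n : nat) (x y : 'I_n -> S),
    [/\ forall k, X (x k), forall k, Y (y k) & z = \sum_(k < n) x k * y k].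

Definition ringimg : S -> Prop := fun z => exists r, z = j r.

Definition principal (x : S) : S -> Prop := fun z => exists r, z = j r * x.

(* invertible ideals of R ⊆ S (elements of the group G(R,S)) *)
Definition invertible (L : S -> Prop) :=
  submod L /\ exists L', submod L' /\ seteq (prodm L L') ringimg.

(* equality of classes in C(R,S) = G(R,S) / {R x : x in S^*} *)
Definition classeq (L M : S -> Prop) :=
  exists x, is_unit x /\ seteq L (prodm (principal x) M).
End Extensions.

(* T is (a model of) the total ring of fractions of R via j : R -> T,
   i.e. the localization of R at its non-zero-divisors. *)
Definition is_total_fractions (R T : comPzRingType) (j : R -> T) :=
  [/\ injective j, (forall s, nzd s -> is_unit (j s))
    & (forall t, exists a s, nzd s /\ t * j s = j a)].

Definition modiso (R S1 S2 : comPzRingType) (j1 : R -> S1) (j2 : R -> S2)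
    (L1 : S1 -> Prop) (L2 : S2 -> Prop) :=
  exists h : S1 -> S2,
    [/\ forall x y, L1 x -> L1 y -> h (x + y) = h x + h y,
        forall r x, L1 x -> h (j1 r * x) = j2 r * h x,
        forall x, L1 x -> L2 (h x),
        forall x y, L1 x -> L1 y -> h x = h y -> x = y
      & forall y, L2 y -> exists2 x, L1 x & h x = y].

(* The map C(A) -> C(B) induced by phi : T(A) -> T(B):
   L |-> the B-submodule of T(B) generated by phi(L). *)
Definition extmod (B TA TB : comPzRingType) (jB : B -> TB) (phi : TA -> TB)
    (L : TA -> Prop) : TB -> Prop :=
  prodm (ringimg jB) (fun z => exists2 l, L l & z = phi l).

(* Both B and T(A) embed in T(B), the latter through phi, which is injective because the
   elements of T(A) are fractions with non-zero-divisor denominators.  Inside T(B), an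
   A-linear isomorphism L ~ I between invertible modules (L in B, I in T(A)) is
   multiplication by a unit y, phi(I) = y L: a linear map out of an invertible module is
   determined by its values on a decomposition 1 = sum a_k a'_k.  Conversely such a
   relation yields an isomorphism, and whether two invertible modules are unit multiples of
   each other can be tested after embedding them in T(B).  The well-definedness,
   injectivity and multiplicativity of C(A,B) -> C(A), and the equality of its image with
   the kernel of C(A) -> C(B), thus become identities between unit multiples of products
   of submodules of T(B).
   The hypotheses on A are only needed to show that every invertible L of A in B is
   isomorphic to an invertible ideal of A in T(A).  In a reduced ring the zero-divisors lie
   in the union of the minimal primes, so prime avoidance over the finitely many minimal
   primes gives x in L and c in L^-1 with x c = s a non-zero-divisor of A; then
   x^-1 L = (c / s) L lies in T(A). *)

From mathcomp Require Import all_boot all_order all_algebra.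
From mathcomp Require Import ring boolp classical_sets.
Set Implicit Arguments. Unset Strict Implicit. Unset Printing Implicit Defensive.
Import GRing.Theory.
Local Open Scope classical_set_scope.
Local Open Scope ring_scope.

Lemma seteqE (T : Type) (X Y : set T) : seteq X Y <-> X = Y.
Proof. by split=> [e|-> //]; apply/funext => x; apply/propext. Qed.

Lemma image_injective (S T : Type) (f : S -> T) (X Y : set S) :
  injective f -> f @` X = f @` Y -> X = Y.
Proof. by move=> finj e; apply/funext => x; rewrite -!(image_inj finj) e. Qed.

Lemma image_preimage_range (S T : Type) (f : S -> T) (Y : set T) :
  Y `<=` range f -> f @` (f @^-1` Y) = Y.
Proof.
move=> Yf; apply/seteqP; split; first exact: image_preimage_subset.
by move=> y Yy; have [x _ fx] := Yf y Yy; exists x; rewrite // /preimage /= fx.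
Qed.

Lemma ringimg_range (R S : comPzRingType) (j : R -> S) : ringimg j = range j.
Proof. by apply/seteqP; split=> [_ [r ->]|_ [r _ <-]]; exists r. Qed.

(** * Products of submodules *)

Section Products.
Variable S : comPzRingType.
Implicit Types (X Y Z : set S) (w : S).

Definition mulset w X := [set w * x | x in X].

Lemma prodm_ind X Y Z : Z 0 -> (forall a b, Z a -> Z b -> Z (a + b)) ->
  (forall x y, X x -> Y y -> Z (x * y)) -> prodm X Y `<=` Z.
Proof.
by move=> Z0 ZD ZM _ [n [x [y [Xx Yy ->]]]]; apply: big_ind => // k _; apply: ZM.
Qed.

Lemma prodm_mul X Y x y : X x -> Y y -> prodm X Y (x * y).
Proof. by move=> Xx Yy; exists 1%N, (fun=> x), (fun=> y); rewrite big_ord1. Qed.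

Lemma prodm0 X Y : prodm X Y 0.
Proof. by exists 0%N, (fun=> 0), (fun=> 0); split=> [[]|[]|]; rewrite ?big_ord0. Qed.

Lemma prodmD X Y a b : prodm X Y a -> prodm X Y b -> prodm X Y (a + b).
Proof.
move=> [n [x [y [Xx Yy ->]]]] [m [x' [y' [Xx' Yy' ->]]]].
pose join T (f : 'I_n -> T) (g : 'I_m -> T) k :=
  match split k with inl p => f p | inr q => g q end.
exists (n + m)%N, (join _ x x'), (join _ y y'); split.
- by move=> k; rewrite /join; case: (split k).
- by move=> k; rewrite /join; case: (split k).
by rewrite big_split_ord /join; congr (_ + _); apply: eq_bigr => k _;
  [rewrite (unsplitK (inl k))|rewrite (unsplitK (inr k))].
Qed.

Lemma prodm_mull w X X' Y p :
  (forall x, X x -> X' (w * x)) -> prodm X Y p -> prodm X' Y (w * p).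
Proof.
move=> XX'; move: p.
apply: (prodm_ind (Z := [set p | prodm X' Y (w * p)])) => /= [|a b|x y Xx Yy].
- by rewrite mulr0; apply: prodm0.
- by rewrite mulrDr; apply: prodmD.
- by rewrite mulrA; apply: prodm_mul => //; apply: XX'.
Qed.

Lemma prodm_mono X X' Y Y' :
  X `<=` X' -> Y `<=` Y' -> prodm X Y `<=` prodm X' Y'.
Proof.
move=> XX' YY'; apply: prodm_ind; [exact: prodm0|exact: prodmD|].
by move=> x y /XX' Xx /YY' Yy; apply: prodm_mul.
Qed.

Lemma prodmC X Y : prodm X Y = prodm Y X.
Proof.
suff sub X' Y' : prodm X' Y' `<=` prodm Y' X' by apply/seteqP; split; apply: sub.
apply: prodm_ind; [exact: prodm0|exact: prodmD|].
by move=> x y Xx Yy; rewrite mulrC; apply: prodm_mul.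
Qed.

Lemma prodmA X Y Z : prodm X (prodm Y Z) = prodm (prodm X Y) Z.
Proof.
suff sub X' Y' Z' : prodm X' (prodm Y' Z') `<=` prodm (prodm X' Y') Z'.
  apply/seteqP; split; first exact: sub.
  by rewrite prodmC [prodm X Y]prodmC [prodm Y Z]prodmC [prodm X _]prodmC; apply: sub.
apply: prodm_ind; [exact: prodm0|exact: prodmD|] => x p Xx.
by apply: prodm_mull => y Yy; apply: prodm_mul.
Qed.

Lemma prodmACA X Y Z W :
  prodm (prodm X Y) (prodm Z W) = prodm (prodm X Z) (prodm Y W).
Proof. by rewrite -!prodmA [prodm Y (prodm Z W)]prodmA [prodm Y Z]prodmC -prodmA. Qed.

Lemma prodmT1 X : prodm setT X 1 -> prodm setT X = setT.
Proof.
by move=> X1; apply/seteqP; split=> // s _; rewrite -[s]mulr1; apply: prodm_mull X1.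
Qed.

Lemma prodm_mulsetl w X Y : prodm (mulset w X) Y = mulset w (prodm X Y).
Proof.
apply/seteqP; split.
  apply: prodm_ind => [|_ _ [a Pa <-] [b Pb <-]|_ y [x Xx <-] Yy].
  - by exists 0; [apply: prodm0|rewrite mulr0].
  - by exists (a + b); [apply: prodmD|rewrite mulrDr].
  - by exists (x * y); [apply: prodm_mul|rewrite mulrA].
by move=> _ [p Pp <-]; apply: prodm_mull Pp => x Xx; exists x.
Qed.

Lemma prodm_mulsetr w X Y : prodm X (mulset w Y) = mulset w (prodm X Y).
Proof. by rewrite prodmC prodm_mulsetl prodmC. Qed.

Lemma mulset_mulset w w' X : mulset w (mulset w' X) = mulset (w * w') X.
Proof. by rewrite /mulset image_comp; congr image; apply/funext => x /=; rewrite mulrA. Qed.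

Lemma mulset1 X : mulset 1 X = X.
Proof. by apply: eq_image_id => x _; rewrite mul1r. Qed.

Lemma mulsetK w w' X : w' * w = 1 -> mulset w' (mulset w X) = X.
Proof. by move=> ww'; rewrite mulset_mulset ww' mulset1. Qed.
End Products.

Section Images.
Variables (S T : comPzRingType) (rho : {rmorphism S -> T}).
Implicit Types (X Y : set S) (w : S).

Lemma img_prodm X Y : rho @` prodm X Y = prodm (rho @` X) (rho @` Y).
Proof.
apply/seteqP; split.
  move=> _ [p + <-].
  apply: (prodm_ind (Z := [set p | prodm (rho @` X) (rho @` Y) (rho p)]))
    => /= [|a b|x y Xx Yy].
  - by rewrite rmorph0; apply: prodm0.
  - by rewrite rmorphD; apply: prodmD.
  - by rewrite rmorphM; apply: prodm_mul; [exists x|exists y].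
apply: prodm_ind => [|_ _ [a Xa <-] [b Yb <-]|_ _ [x Xx <-] [y Yy <-]].
- by exists 0; [apply: prodm0|rewrite rmorph0].
- by exists (a + b); [apply: prodmD|rewrite rmorphD].
- by exists (x * y); [apply: prodm_mul|rewrite rmorphM].
Qed.

Lemma img_mulset w X : rho @` mulset w X = mulset (rho w) (rho @` X).
Proof. by rewrite /mulset !image_comp; congr image; apply/funext => x /=; rewrite rmorphM. Qed.

Lemma img_ringimg (R : comPzRingType) (j : R -> S) : rho @` ringimg j = ringimg (rho \o j).
Proof. by rewrite !ringimg_range image_comp. Qed.

Lemma is_unit_rmorph w : is_unit w -> is_unit (rho w).
Proof. by move=> [w' ww']; exists (rho w'); rewrite -rmorphM ww' rmorph1. Qed.
End Images.

Section Submodules.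
Variables (R S : comPzRingType) (j : R -> S).
Implicit Types (X Y : set S) (w : S).

Lemma submod_mulset w Y : submod j Y -> submod j (mulset w Y).
Proof.
move=> [Y0 YD YM]; split; first by exists 0; rewrite ?mulr0.
  by move=> _ _ [a Ya <-] [b Yb <-]; exists (a + b); [apply: YD|rewrite mulrDr].
by move=> r _ [a Ya <-]; exists (j r * a); [apply: YM|rewrite mulrCA].
Qed.

Lemma submod_prodml X Y : submod j X -> submod j (prodm X Y).
Proof.
move=> [_ _ XM]; split; [exact: prodm0|exact: prodmD|] => r p.
exact/prodm_mull/XM.
Qed.

Lemma submod_img (T : comPzRingType) (rho : {rmorphism S -> T}) X :
  submod j X -> submod (rho \o j) (rho @` X).
Proof.
move=> [X0 XD XM]; split; first by exists 0; rewrite ?rmorph0.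
  by move=> _ _ [a Xa <-] [b Xb <-]; exists (a + b); [apply: XD|rewrite rmorphD].
by move=> r _ [a Xa <-]; exists (j r * a); [apply: XM|rewrite rmorphM].
Qed.

Lemma submod_preimage (T : comPzRingType) (rho : {rmorphism S -> T}) (Z : set T) :
  submod (rho \o j) Z -> submod j (rho @^-1` Z).
Proof.
move=> [Z0 ZD ZM]; rewrite /preimage; split=> /=; first by rewrite rmorph0.
  by move=> a b Za Zb; rewrite rmorphD; apply: ZD.
by move=> r a Za; rewrite rmorphM; apply: ZM.
Qed.
End Submodules.

(** * Invertible modules *)

Section Invertible.
Variables (R S : comPzRingType) (j : {rmorphism R -> S}).
Implicit Types (X Y : set S) (w : S).

Lemma ringimg1 : ringimg j 1.
Proof. by exists 1; rewrite rmorph1. Qed.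

Lemma submod_ringimg : submod j (ringimg j).
Proof.
split; first by exists 0; rewrite rmorph0.
  by move=> _ _ [a ->] [b ->]; exists (a + b); rewrite rmorphD.
by move=> r _ [a ->]; exists (r * a); rewrite rmorphM.
Qed.

Lemma prodm_ringimg : prodm (ringimg j) (ringimg j) = ringimg j.
Proof.
apply/seteqP; split.
  have [R0 RD _] := submod_ringimg.
  by apply: prodm_ind => // _ _ [a ->] [b ->]; exists (a * b); rewrite rmorphM.
by move=> _ [r ->]; rewrite -[j r]mulr1; apply: prodm_mul; [exists r|exact: ringimg1].
Qed.

Lemma principal_prodm x Y : submod j Y -> prodm (principal j x) Y = mulset x Y.
Proof.
move=> sY; have [_ _ YM] := sY; have [M0 MD _] := submod_mulset x sY.
apply/seteqP; split.
  apply: prodm_ind => // _ y [r ->] Yy.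
  by exists (j r * y); [apply: YM|rewrite mulrCA mulrA].
by move=> _ [y Yy <-]; apply: prodm_mul => //; exists 1; rewrite rmorph1 mul1r.
Qed.

Lemma invertibleP X : invertible j X -> exists2 X', prodm X X' = ringimg j & prodm X X' 1.
Proof. by move=> [_ [X' [_ /seteqE eX]]]; exists X'; rewrite // eX; apply: ringimg1. Qed.

Lemma invertible_prodm X Y : invertible j X -> invertible j Y -> invertible j (prodm X Y).
Proof.
move=> [sX [X' [sX' /seteqE eX]]] [_ [Y' [_ /seteqE eY]]].
split; first exact: submod_prodml.
exists (prodm X' Y'); split; first exact: submod_prodml.
by apply/seteqE; rewrite prodmACA eX eY prodm_ringimg.
Qed.

Lemma prodmT_invertible X : invertible j X -> prodm setT X = setT.
Proof.
move=> /invertibleP [X' _ X1]; apply: prodmT1.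
by rewrite prodmC; apply: prodm_mono X1.
Qed.
End Invertible.

Section Associates.
Variable T : comPzRingType.
Implicit Types (X Y : set T) (w y : T).

Definition associate X Y := exists2 w, is_unit w & X = mulset w Y.

Lemma is_unitM w w' : is_unit w -> is_unit w' -> is_unit (w * w').
Proof. by move=> [z wz] [z' wz']; exists (z * z'); rewrite mulrACA wz wz' mulr1. Qed.

Lemma associate_mulset y y' X Y : is_unit y -> is_unit y' ->
  associate (mulset y X) (mulset y' Y) <-> associate X Y.
Proof.
move=> yU [z' yz'] ; have [z yz] := yU.
have zU : is_unit z by exists y; rewrite mulrC.
split=> [[v vU e]|[v vU ->]].
  exists (z * v * y'); first by apply: is_unitM; [apply: is_unitM|exists z'].
  by rewrite -(mulsetK X (_ : z * y = 1)) ?e ?mulset_mulset ?mulrA // mulrC.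
exists (y * v * z'); first by apply: is_unitM; [apply: is_unitM|exists y'; rewrite mulrC].
by rewrite !mulset_mulset -!mulrA [z' * y']mulrC yz' mulr1.
Qed.
End Associates.

Lemma classeqE (R S : comPzRingType) (j : {rmorphism R -> S}) (X Y : set S) :
  submod j Y -> classeq j X Y <-> associate X Y.
Proof.
move=> sY; split=> [[x [xU /seteqE ->]]|[x xU ->]].
  by exists x; rewrite ?principal_prodm.
by exists x; split=> //; apply/seteqE; rewrite principal_prodm.
Qed.

Section AssociateImage.
Variables (R S T : comPzRingType) (j : {rmorphism R -> S}) (rho : {rmorphism S -> T}).
Hypothesis rho_inj : injective rho.
Implicit Types (X Y : set S).

Lemma unit_factor_range X Y Y' w : prodm Y Y' 1 ->
  rho @` X = mulset w (rho @` Y) -> range rho w.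
Proof.
move=> Y1 eX; have : mulset w (rho @` prodm Y Y') (w * rho 1) by exists (rho 1); first exists 1.
rewrite img_prodm -prodm_mulsetl -eX -img_prodm rmorph1 mulr1 => -[z _ <-].
by exists z.
Qed.

Lemma associate_img X Y : invertible j X -> invertible j Y ->
  associate (rho @` X) (rho @` Y) <-> associate X Y.
Proof.
move=> /invertibleP [X' _ X1] /invertibleP [Y' _ Y1].
split=> [[w [w' ww'] eX]|[z zU ->]]; last first.
  by exists (rho z); [apply: is_unit_rmorph|rewrite img_mulset].
have eY : rho @` Y = mulset w' (rho @` X) by rewrite eX mulsetK // mulrC.
have [z _ zw] := unit_factor_range Y1 eX.
have [z' _ zw'] := unit_factor_range X1 eY.
exists z; first by exists z'; apply: rho_inj; rewrite rmorphM zw zw' ww' rmorph1.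
by apply: (image_injective rho_inj); rewrite img_mulset zw.
Qed.
End AssociateImage.

Lemma invertible_linear_mul (R S T : comPzRingType) (j : {rmorphism R -> S})
    (rho : {rmorphism S -> T}) (X : set S) (f : S -> T) :
  invertible j X ->
  (forall a b, X a -> X b -> f (a + b) = f a + f b) ->
  (forall r a, X a -> f (j r * a) = rho (j r) * f a) ->
  exists y, forall x, X x -> f x = rho x * y.
Proof.
move=> iX fD fZ; have [[X0 XD XZ] _] := iX.
have [X' eX [n [a [a' [Xa Xa' e1]]]]] := invertibleP iX.
have f0 : f 0 = 0 by apply: (@addrI _ (f 0)); rewrite -fD // !addr0.
have f_sum (F : 'I_n -> S) : (forall k, X (F k)) -> f (\sum_k F k) = \sum_k f (F k).
  move=> XF; suff [] : X (\sum_k F k) /\ f (\sum_k F k) = \sum_k f (F k) by [].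
  apply: (big_ind2 (fun u v => X u /\ f u = v)) => // u v u' v' [Xu <-] [Xu' <-].
  by split; [apply: XD|rewrite fD].
(* the multiplier is read off the decomposition 1 = \sum_k a k * a' k *)
exists (\sum_k f (a k) * rho (a' k)) => x Xx.
have xa k : ringimg j (x * a' k) by rewrite -eX; apply: prodm_mul.
have ex : x = \sum_k (x * a' k) * a k.
  by rewrite -[x in LHS]mulr1 e1 mulr_sumr; apply: eq_bigr => k _; ring.
rewrite {1}ex f_sum => [|k]; last by have [r ->] := xa k; apply: XZ.
rewrite mulr_sumr; apply: eq_bigr => k _; have [r er] := xa k.
by rewrite er fZ // -er !rmorphM; ring.
Qed.

Section IsoImages.
Variables (R S1 S2 T : comPzRingType) (j1 : {rmorphism R -> S1}) (j2 : {rmorphism R -> S2}).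
Variables (rho1 : {rmorphism S1 -> T}) (rho2 : {rmorphism S2 -> T}).
Hypothesis rhoj : forall r, rho1 (j1 r) = rho2 (j2 r).
Implicit Types (X : set S1) (Y : set S2).

Lemma modiso_img_mulset X Y : invertible j1 X -> invertible j2 Y -> modiso j1 j2 X Y ->
  exists2 y, is_unit y & rho2 @` Y = mulset y (rho1 @` X).
Proof.
move=> iX iY [h [hD hZ hXY _ hsurj]].
have [y hy] : exists y, forall x, X x -> rho2 (h x) = rho1 x * y.
  apply: (invertible_linear_mul (rho := rho1) iX) => [a b Xa Xb|r a Xa].
    by rewrite hD // rmorphD.
  by rewrite hZ // rmorphM rhoj.
have eY : rho2 @` Y = mulset y (rho1 @` X).
  apply/seteqP; split=> [_ [b /hsurj [x Xx <-] <-]|_ [_ [x Xx <-] <-]].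
    by exists (rho1 x); [exists x|rewrite hy // mulrC].
  by exists (h x); [apply: hXY|rewrite hy // mulrC].
exists y => //; have [Y' _ Y1] := invertibleP iY.
have : (rho2 @` prodm Y Y') 1 by exists 1; rewrite ?rmorph1.
by rewrite img_prodm eY prodm_mulsetl => -[t _ yt]; exists t.
Qed.

Hypotheses (rho1_inj : injective rho1) (rho2_inj : injective rho2).

Lemma img_mulset_modiso X Y y : submod j1 X -> is_unit y ->
  rho2 @` Y = mulset y (rho1 @` X) -> modiso j1 j2 X Y.
Proof.
move=> [X0 XD XZ] [y' yy'] eY.
pose h x := xget 0 [set z | rho2 z = y * rho1 x].
have hP x : X x -> Y (h x) /\ rho2 (h x) = y * rho1 x.
  move=> Xx; have : (rho2 @` Y) (y * rho1 x) by rewrite eY; exists (rho1 x); first exists x.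
  case=> z Yz ez; have hx : rho2 (h x) = y * rho1 x.
    by apply: (@xgetPex _ 0 [set z | rho2 z = y * rho1 x]); exists z.
  by rewrite (rho2_inj (etrans hx (esym ez))).
exists h; split=> [a b Xa Xb|r a Xa|x /hP []//|a b Xa Xb e|z Yz].
- apply: rho2_inj; rewrite rmorphD !(hP _ _).2 ?rmorphD ?mulrDr //; exact: XD.
- apply: rho2_inj; rewrite rmorphM !(hP _ _).2 //; last exact: XZ.
  by rewrite rmorphM -rhoj mulrCA.
- apply: rho1_inj; have := congr1 (fun t => y' * t) (congr1 rho2 e).
  by rewrite !(hP _ _).2 // !mulrA [y' * y]mulrC yy' !mul1r.
- have : (rho2 @` Y) (rho2 z) by exists z.
  rewrite eY => -[_ [x Xx <-] e]; exists x => //.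
  by apply: rho2_inj; rewrite (hP x Xx).2.
Qed.
End IsoImages.

Lemma invertible_preimage (R S T : comPzRingType) (j : {rmorphism R -> S})
    (rho : {rmorphism S -> T}) (Z Z' : set T) :
  injective rho -> Z `<=` range rho -> Z' `<=` range rho ->
  submod (rho \o j) Z -> submod (rho \o j) Z' -> prodm Z Z' = rho @` ringimg j ->
  invertible j (rho @^-1` Z) /\ rho @` (rho @^-1` Z) = Z.
Proof.
move=> rho_inj Zrho Z'rho sZ sZ' eZ; rewrite image_preimage_range //; split=> //.
split; first exact: submod_preimage.
exists (rho @^-1` Z'); split; first exact: submod_preimage.
apply/seteqE/(image_injective rho_inj).
by rewrite img_prodm !image_preimage_range.
Qed.

(** * Minimal primes and prime avoidance *)

Lemma zorn_maximal (T : Type) (P : set T) (R : T -> T -> Prop) :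
  (forall x, R x x) -> (forall x y z, R x y -> R y z -> R x z) ->
  (forall C, C `<=` P -> total_on C R -> exists2 u, P u & forall x, C x -> R x u) ->
  exists2 m, P m & forall x, P x -> R m x -> R x m.
Proof.
move=> Rxx Rtr chain.
have [m0 Pm0 _] : exists2 u, P u & forall x, set0 x -> R x u by apply: chain => // ? ? [].
pose R' (a b : {x | P x}) := `[< R (sval a) (sval b) >].
have [||A totA|[m Pm] mmax] := ZL_preorder (exist _ m0 Pm0) (R := R').
- by move=> a; apply/asboolP.
- by move=> a b c /asboolP ab /asboolP bc; apply/asboolP; apply: Rtr bc.
- have [_ [a _ <-]|_ _ [a Aa <-] [b Ab <-]|u Pu ub] := chain (sval @` A).
  + exact: svalP.
  + by case: (totA a b Aa Ab) => /asboolP; [left|right].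
  + by exists (exist _ u Pu) => a Aa; apply/asboolP; apply: ub; exists a.
- exists m => // x Px mx.
  by have /asboolP := mmax (exist _ x Px) (introT (asboolP _) mx).
Qed.

Section PrimeIdeals.
Variable A : comPzRingType.
Implicit Types (I P Q : set A) (a b c x y : A).

Lemma ideal_addl I a b : ideal I -> I a -> I (a + b) <-> I b.
Proof.
move=> [_ ID IM] Ia; split=> [Iab|]; last exact: ID.
by rewrite -(addKr a b) -mulN1r; apply: ID => //; apply: IM.
Qed.

Lemma prime_ideal1 P : prime_ideal P -> ~ P 1.
Proof. by case. Qed.

Lemma prime_ideal_mul P x y : prime_ideal P -> ~ P x -> ~ P y -> ~ P (x * y).
Proof. by move=> [_ _ Pp] Px Py /Pp []. Qed.

Lemma ideal_bigcup_chain (C : set (set A)) :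
  C `<=` @ideal A -> total_on C subset -> (exists I, C I) -> ideal (\bigcup_(I in C) I).
Proof.
move=> Cid tot [I0 CI0]; split; first by exists I0 => //; have [] := Cid _ CI0.
  move=> a b [I CI Ia] [J CJ Jb]; have [IJ|JI] := tot I J CI CJ.
    by exists J => //; have [_ JD _] := Cid _ CJ; apply: JD => //; apply: IJ.
  by exists I => //; have [_ ID _] := Cid _ CI; apply: ID => //; apply: JI.
by move=> r a [I CI Ia]; exists I => //; have [_ _ M] := Cid _ CI; apply: M.
Qed.

Lemma prime_bigcap_chain (C : set (set A)) :
  C `<=` @prime_ideal A -> total_on C subset -> (exists P, C P) ->
  prime_ideal (\bigcap_(P in C) P).
Proof.
move=> Cpr tot [P0 CP0]; split; last first.
- move=> x y xy; apply: contrapT => nxy.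
  have [P CP Px] : exists2 P, C P & ~ P x.
    apply: contrapT => h; apply: nxy; left => P CP; by apply: contrapT => Px; apply: h; exists P.
  have [Q CQ Qy] : exists2 Q, C Q & ~ Q y.
    apply: contrapT => h; apply: nxy; right => Q CQ; by apply: contrapT => Qy; apply: h; exists Q.
  have [PQ|QP] := tot P Q CP CQ.
    by apply: (prime_ideal_mul (Cpr _ CP) Px (fun Py => Qy (PQ _ Py))); apply: xy.
  by apply: (prime_ideal_mul (Cpr _ CQ) (fun Qx => Px (QP _ Qx)) Qy); apply: xy.
- by move=> all1; apply: (prime_ideal1 (Cpr _ CP0)); apply: all1.
split=> [P CP|a b Ia Ib P CP|r a Ia P CP]; have [[P0' PD PM] _ _] := Cpr _ CP => //.
- by apply: PD; [apply: Ia|apply: Ib].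
- by apply: PM; apply: Ia.
Qed.

Definition addmul I a := [set z | exists m r, I m /\ z = m + r * a].

Lemma ideal_addmul I a : ideal I -> ideal (addmul I a).
Proof.
move=> [I0 ID IM]; split; first by exists 0, 0; rewrite mul0r addr0.
  move=> _ _ [m [r [Im ->]]] [m' [r' [Im' ->]]]; exists (m + m'), (r + r').
  by split; [apply: ID|rewrite mulrDl addrACA].
by move=> s _ [m [r [Im ->]]]; exists (s * m), (s * r); split; [apply: IM|rewrite mulrDr mulrA].
Qed.

Lemma ex_prime_avoiding_powers b : (forall n, b ^+ n <> 0) -> exists2 Q, prime_ideal Q & ~ Q b.
Proof.
move=> bn0; pose P I := ideal I /\ forall n, ~ I (b ^+ n).
have [M [iM Mb] Mmax] : exists2 M, P M & forall I, P I -> M `<=` I -> I `<=` M.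
  apply: (zorn_maximal (R := @subset A)) => [I t //|I J K IJ JK|C CP tot].
    exact: subset_trans IJ JK.
  have [[I0 CI0]|C0] := pselect (exists I, C I).
    exists (\bigcup_(I in C) I) => [|I CI x Ix]; last by exists I.
    split; last by move=> n [I /CP [_ Ib] /Ib].
    by apply: ideal_bigcup_chain => [I /CP []||]; last exists I0.
  exists [set 0] => [|I CI]; last by case: C0; exists I.
  split=> [|n /bn0//]; split=> // [_ _ -> ->|r _ ->]; by rewrite ?addr0 ?mulr0.
have [M0 MD MM] := iM.
have grow w : ~ M w -> exists n, addmul M w (b ^+ n).
  move=> Mw; apply: contrapT => nb; apply: Mw.
  have sub : M `<=` addmul M w by move=> m Mm; exists m, 0; rewrite mul0r addr0.
  have := Mmax _ (conj (ideal_addmul w iM) (fun n bn => nb (ex_intro _ n bn))) sub.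
  by apply; exists 0, 1; rewrite mul1r add0r.
exists M; last by rewrite -[b]expr1; apply: Mb.
split=> //; first by rewrite -(expr0 b); apply: Mb.
move=> x y Mxy; apply: contrapT => nxy.
have Mx : ~ M x by move=> Mx; apply: nxy; left.
have My : ~ M y by move=> My; apply: nxy; right.
have [n [m1 [r1 [M1 e1]]]] := grow x Mx; have [k [m2 [r2 [M2 e2]]]] := grow y My.
apply: (Mb (n + k)%N); rewrite exprD e1 e2.
have -> : (m1 + r1 * x) * (m2 + r2 * y) = m1 * (m2 + r2 * y) + (m2 * (r1 * x) + r1 * r2 * (x * y)).
  by ring.
by apply: (MD); [rewrite mulrC|apply: (MD); [rewrite mulrC|]]; apply: (MM).
Qed.

Lemma ex_minimal_prime_sub Q : prime_ideal Q -> exists2 P, minimal_prime P & P `<=` Q.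
Proof.
move=> pQ; pose Pr P := prime_ideal P /\ P `<=` Q.
have [P [pP PQ] Pmin] : exists2 P, Pr P & forall P', Pr P' -> P' `<=` P -> P `<=` P'.
  apply: (zorn_maximal (R := fun P P' => P' `<=` P)) => [P1 t //|P1 P2 P3 P12 P23|C CP tot].
    exact: subset_trans P23 P12.
  have [[P0 CP0]|C0] := pselect (exists P, C P); last first.
    by exists Q => [|P' CP']; [split|case: C0; exists P'].
  exists (\bigcap_(P in C) P) => [|P' CP' x Cx]; last exact: Cx.
  split; last by move=> x Cx; have [_ P0Q] := CP _ CP0; apply: P0Q; apply: Cx.
  apply: prime_bigcap_chain => [P /CP []//||]; last by exists P0.
  by move=> P P' CP' CP''; case: (tot P P' CP' CP''); [right|left].
by exists P => //; split=> // P' pP' P'P; apply: Pmin => //; split=> //; apply: subset_trans PQ.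
Qed.

Lemma nzd_of_notin_minimal_primes a : reduced A -> (forall P, minimal_prime P -> ~ P a) -> nzd a.
Proof.
move=> red nPa b ab0; apply: contrapT => b0.
have [Q pQ Qb] := ex_prime_avoiding_powers (fun n bn => b0 (red b n bn)).
have [P mP PQ] := ex_minimal_prime_sub pQ; have [[[P0 _ _] _ Pp] _] := mP.
by have [/(nPa P mP)|/PQ] : P a \/ P b by apply: Pp; rewrite ab0.
Qed.

Lemma ex_notin_prime_in_minimals P (Q : nat -> set A) m : prime_ideal P ->
  (forall k, (k < m)%N -> minimal_prime (Q k) -> exists2 e, Q k e & ~ P e) ->
  exists c, ~ P c /\ forall k, (k < m)%N -> minimal_prime (Q k) -> Q k c.
Proof.
move=> pP; elim: m => [_|m IH Qe]; first by exists 1; split=> //; apply: prime_ideal1.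
have [c [Pc Qc]] := IH (fun k km => Qe k (ltnW km)).
have [mQ|nmQ] := pselect (minimal_prime (Q m)); last first.
  by exists c; split=> // k; rewrite ltnS leq_eqVlt => /predU1P [->|/Qc].
have [e Qe' Pe] := Qe m (ltnSn m) mQ.
exists (c * e); split; first exact: prime_ideal_mul.
move=> k; rewrite ltnS leq_eqVlt => /predU1P [-> [[[_ _ QM] _ _] _]|km mk].
  by apply: QM.
by have [[[_ _ QM] _ _] _] := mk; rewrite mulrC; apply: QM; apply: Qc.
Qed.
End PrimeIdeals.

Section PureProducts.
Variables (A B : comPzRingType) (i : {rmorphism A -> B}) (L L' : set B).
Hypotheses (sL : submod i L) (sL' : submod i L') (eL : prodm L L' = ringimg i).

Definition pure_product (a : A) := exists x y, [/\ L x, L' y & x * y = i a].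

Lemma pure_product_shift (P : set A) (a c w : A) : prime_ideal P ->
  pure_product a -> pure_product w -> ~ P w -> ~ P c -> P a ->
  exists t, pure_product (a + c * t) /\ ~ P (a + c * t).
Proof.
move=> pP [x [y [Lx L'y exy]]] [z [z' [Lz L'z' ezz]]] Pw Pc Pa.
have [[P0 PD PM] _ _] := pP; have [_ LD LM] := sL; have [_ L'D L'M] := sL'.
have [u eu] : ringimg i (x * z') by rewrite -eL; apply: prodm_mul.
have [v ev] : ringimg i (z * y) by rewrite -eL; apply: prodm_mul.
have notin t : ~ P (c * t) -> ~ P (a + c * t) by rewrite ideal_addl.
have Lxz : L (x + i c * z) by apply: LD => //; apply: LM.
have L'yz : L' (y + i c * z') by apply: L'D => //; apply: L'M.
(* (x + c z) (y + c z') = x y + c (u + v) + c^2 w: if u or v is outside P, one of the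
   mixed products x (y + c z'), (x + c z) y already works *)
have [Pu|Pu] := pselect (P u); last first.
  exists u; split; last by apply: notin; apply: prime_ideal_mul.
  exists x, (y + i c * z'); split=> //.
  by rewrite mulrDr exy mulrCA eu -!rmorphM -rmorphD.
have [Pv|Pv] := pselect (P v); last first.
  exists v; split; last by apply: notin; apply: prime_ideal_mul.
  exists (x + i c * z), y; split=> //.
  by rewrite mulrDl exy -mulrA ev -!rmorphM -rmorphD.
exists (u + v + c * w); split.
  exists (x + i c * z), (y + i c * z'); split=> //.
  have -> : (x + i c * z) * (y + i c * z') =
      x * y + i c * (x * z') + i c * (z * y) + i c * i c * (z * z') by ring.
  by rewrite exy eu ev ezz -!rmorphM -!rmorphD; congr (i _); ring.
have -> : a + c * (u + v + c * w) = (a + c * u + c * v) + c * (c * w) by ring.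
rewrite ideal_addl //; first by apply: prime_ideal_mul => //; apply: prime_ideal_mul.
by apply: (PD); [apply: (PD) => //|]; apply: PM.
Qed.

Lemma pure_product0 : pure_product 0.
Proof. by have [L0 _ _] := sL; have [L'0 _ _] := sL'; exists 0, 0; rewrite mul0r rmorph0. Qed.

Lemma ex_pure_product_notin (P : set A) : injective i -> ideal P -> ~ P 1 ->
  exists2 w, pure_product w & ~ P w.
Proof.
move=> i_inj [P0 PD PM] P1; apply: contrapT => npure; apply: P1.
have sub : prodm L L' `<=` i @` P.
  apply: prodm_ind => [|_ _ [a Pa <-] [b Pb <-]|x y Lx L'y].
  - by exists 0; rewrite ?rmorph0.
  - by exists (a + b); rewrite ?rmorphD //; apply: PD.
  have [a ea] : ringimg i (x * y) by rewrite -eL; apply: prodm_mul.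
  exists a; last by rewrite ea.
  by apply: contrapT => Pa; apply: npure; exists a => //; exists x, y.
have [p Pp ip] : (i @` P) 1 by apply: sub; rewrite eL; apply: ringimg1.
by have -> : 1 = p by apply: i_inj; rewrite ip rmorph1.
Qed.

Lemma pure_product_avoid (f : nat -> set A) n :
  (forall P, minimal_prime P -> exists2 w, pure_product w & ~ P w) ->
  exists a, pure_product a /\ forall k, (k < n)%N -> minimal_prime (f k) -> ~ f k a.
Proof.
move=> cover; elim: n => [|n [a [pa ha]]]; first by exists 0; split=> //; apply: pure_product0.
have [[mn fna]|keep] := pselect (minimal_prime (f n) /\ f n a); last first.
  exists a; split=> // k; rewrite ltnS leq_eqVlt => /predU1P [-> mn fna|]; last exact: ha.
  by apply: keep.
have [pn minn] := mn.
have [c [nc hc]] : exists c, ~ f n c /\ forall k, (k < n)%N -> minimal_prime (f k) -> f k c.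
  apply: ex_notin_prime_in_minimals => // k kn mk.
  apply: contrapT => nsub; apply: (ha k kn mk); apply: (minn (f k) mk.1) fna.
  by move=> e fke; apply: contrapT => nfe; apply: nsub; exists e.
have [w pw nw] := cover _ mn.
have [t [pt nt]] := pure_product_shift pn pa pw nw nc fna.
exists (a + c * t); split=> // k; rewrite ltnS leq_eqVlt => /predU1P [-> _|kn mk].
  exact: nt.
have [[iP _ _] _] := mk; have [_ _ PM] := iP.
rewrite addrC ideal_addl //; first exact: ha.
by rewrite mulrC; apply: PM; apply: hc.
Qed.

Lemma ex_nzd_pure_product : injective i -> reduced A -> fin_min_primes A ->
  exists x c s, [/\ L x, L' c, x * c = i s & nzd s].
Proof.
move=> i_inj red [n [f hf]].
have cover P : minimal_prime P -> exists2 w, pure_product w & ~ P w.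
  by move=> [[iP P1 _] _]; apply: ex_pure_product_notin.
have [s [[x [c [Lx L'c exc]]] hs]] := pure_product_avoid f n cover.
exists x, c, s; split=> //; apply: nzd_of_notin_minimal_primes => // P mP.
have [k kn /seteqE ePf] := hf P mP; rewrite ePf in mP *.
exact: hs.
Qed.
End PureProducts.

(** * The exact sequence *)

Section Main.
Variables (A B TA TB : comPzRingType) (i : {rmorphism A -> B}).
Hypothesis i_inj : injective i.
Variables (jA : {rmorphism A -> TA}) (jB : {rmorphism B -> TB}) (phi : {rmorphism TA -> TB}).
Hypotheses (hTA : is_total_fractions jA) (hTB : is_total_fractions jB).
Hypothesis hphi : forall a, phi (jA a) = jB (i a).
Hypotheses (Ared : reduced A) (Amin : fin_min_primes A).
Hypothesis hnzd : forall a : A, nzd a -> nzd (i a).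

Local Notation ext := (extmod jB phi).

Lemma extmodE X : ext X = prodm (ringimg jB) (phi @` X).
Proof. by congr prodm; apply/seteqP; split=> [_ [l Xl ->]|_ [l Xl <-]]; exists l. Qed.

Lemma phi_inj : injective phi.
Proof.
have [jA_inj unitA fracA] := hTA; have [jB_inj _ _] := hTB.
suff phi0 x : phi x = 0 -> x = 0.
  by move=> x y e; apply/eqP; rewrite -subr_eq0; apply/eqP/phi0; rewrite rmorphB e subrr.
move=> px0; have [a [s [ns e]]] := fracA x; have [t st] := unitA s ns.
have a0 : a = 0 by apply/i_inj/jB_inj; rewrite -hphi -e rmorphM px0 mul0r !rmorph0.
by rewrite -[x]mulr1 -st mulrA e a0 rmorph0 mul0r.
Qed.

Lemma phi_jA : phi \o jA = jB \o i.
Proof. by apply/funext => a /=; apply: hphi. Qed.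

Lemma phi_ringimg : phi @` ringimg jA = jB @` ringimg i.
Proof. by rewrite !img_ringimg phi_jA. Qed.

Lemma submod_ext X : submod jB (ext X).
Proof. exact/submod_prodml/submod_ringimg. Qed.

Lemma ext_prodm X Y : ext (prodm X Y) = prodm (ext X) (ext Y).
Proof. by rewrite !extmodE img_prodm prodmACA prodm_ringimg. Qed.

Lemma ext_mulset w X : ext (mulset w X) = mulset (phi w) (ext X).
Proof. by rewrite !extmodE img_mulset prodm_mulsetr. Qed.

Lemma ext_ringimg : ext (ringimg jA) = ringimg jB.
Proof.
rewrite extmodE phi_ringimg [ringimg jB]ringimg_range -img_prodm prodmT1 //.
by rewrite -[1]mulr1; apply: prodm_mul => //; apply: ringimg1.
Qed.

Lemma ext_img X : phi @` X `<=` ext X.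
Proof.
move=> _ [x Xx <-]; rewrite extmodE -[phi x]mul1r.
by apply: prodm_mul; [apply: ringimg1|exists x].
Qed.

Lemma invertible_ext I : invertible jA I -> invertible jB (ext I).
Proof.
move=> [_ [I' [_ /seteqE eI]]]; split; first exact: submod_ext.
by exists (ext I'); split; [apply: submod_ext|apply/seteqE; rewrite -ext_prodm eI ext_ringimg].
Qed.

Lemma classeq_ext I J : submod jA J -> classeq jA I J -> classeq jB (ext I) (ext J).
Proof.
move=> sJ /(classeqE _ sJ) [x xU ->]; apply/(classeqE _ (submod_ext J)).
by exists (phi x); [apply: is_unit_rmorph|rewrite ext_mulset].
Qed.

Lemma modiso_phi_mulset L I : invertible i L -> invertible jA I -> modiso i jA L I ->
  exists2 y, is_unit y & phi @` I = mulset y (jB @` L).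
Proof. exact: (modiso_img_mulset (fun a => esym (hphi a))). Qed.

Lemma mulset_phi_modiso L I y : submod i L -> is_unit y ->
  phi @` I = mulset y (jB @` L) -> modiso i jA L I.
Proof.
have [jB_inj _ _] := hTB.
exact: (img_mulset_modiso (fun a => esym (hphi a)) jB_inj phi_inj).
Qed.

Lemma ex_modiso_invertible L : invertible i L -> exists2 I, invertible jA I & modiso i jA L I.
Proof.
move=> [sL [L' [sL' /seteqE eL]]].
have [x [c [s [Lx L'c exc ns]]]] := ex_nzd_pure_product sL sL' eL i_inj Ared Amin.
have [_ unitA _] := hTA; have [jB_inj unitB _] := hTB.
have [t st] := unitA s ns.
have [w xw] : is_unit (jB x).
  by apply: unitB => z xz0; apply: (hnzd ns); rewrite -exc mulrAC xz0 mul0r.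
have ew : jB c * phi t = w.
  have e1 : jB x * (jB c * phi t) = 1 by rewrite mulrA -rmorphM exc -hphi -rmorphM st rmorph1.
  by rewrite -[w]mulr1 -e1 mulrA [w * _]mulrC xw mul1r.
(* x^-1 L comes from T(A) since x^-1 = c / s *)
pose Z := mulset w (jB @` L); pose Z' := mulset (jB x) (jB @` L').
have [iI eI] : invertible jA (phi @^-1` Z) /\ phi @` (phi @^-1` Z) = Z.
  apply: (invertible_preimage (Z' := Z')); rewrite ?phi_jA; try exact/submod_mulset/submod_img.
  - exact: phi_inj.
  - move=> _ [_ [l Ll <-] <-]; have [a ea] : ringimg i (l * c) by rewrite -eL; apply: prodm_mul.
    by exists (jA a * t) => //; rewrite rmorphM hphi -ea rmorphM -mulrA ew mulrC.
  - move=> _ [_ [l L'l <-] <-]; have [a ea] : ringimg i (x * l) by rewrite -eL; apply: prodm_mul.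
    by exists (jA a) => //; rewrite hphi -ea rmorphM.
  - rewrite prodm_mulsetl prodm_mulsetr mulset_mulset -img_prodm eL.
    by rewrite [w * _]mulrC xw mulset1 phi_ringimg.
exists (phi @^-1` Z) => //.
by apply: (mulset_phi_modiso (y := w)) => //; exists (jB x); rewrite mulrC.
Qed.

Lemma modiso_classeq L M I J : invertible i L -> invertible i M ->
  invertible jA I -> invertible jA J -> modiso i jA L I -> modiso i jA M J ->
  classeq i L M <-> classeq jA I J.
Proof.
move=> iL iM iI iJ /(modiso_phi_mulset iL iI) [y yU eI] /(modiso_phi_mulset iM iJ) [y' y'U eJ].
have [jB_inj _ _] := hTB.
rewrite (classeqE _ iM.1) (classeqE _ iJ.1) -(associate_img jB_inj iL iM).
by rewrite -(associate_img phi_inj iI iJ) eI eJ associate_mulset.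
Qed.

Lemma modiso_prodm_classeq L M I J K : invertible i L -> invertible i M ->
  invertible jA I -> invertible jA J -> invertible jA K ->
  modiso i jA L I -> modiso i jA M J -> modiso i jA (prodm L M) K ->
  classeq jA K (prodm I J).
Proof.
move=> iL iM iI iJ iK hLI hMJ hK.
have iLM := invertible_prodm iL iM; have iIJ := invertible_prodm iI iJ.
have [y yU eI] := modiso_phi_mulset iL iI hLI.
have [y' y'U eJ] := modiso_phi_mulset iM iJ hMJ.
have [z zU eK] := modiso_phi_mulset iLM iK hK.
apply/(classeqE _ iIJ.1)/(associate_img phi_inj iK iIJ).
rewrite eK [phi @` _]img_prodm eI eJ prodm_mulsetl prodm_mulsetr mulset_mulset -img_prodm.
rewrite associate_mulset //; last exact: is_unitM.
by exists 1; [exists 1; rewrite mulr1|rewrite mulset1].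
Qed.

Lemma ext_associate_modiso I : invertible jA I -> associate (ext I) (ringimg jB) ->
  exists2 L, invertible i L & modiso i jA L I.
Proof.
move=> [sI [I' [sI' /seteqE eI]]] [u [v uv] eu]; have [jB_inj _ _] := hTB.
(* u^-1 phi(I) lies in B since phi(I) is contained in ext I = u B *)
pose Z := mulset v (phi @` I); pose Z' := mulset u (phi @` I').
have [iL eL] : invertible i (jB @^-1` Z) /\ jB @` (jB @^-1` Z) = Z.
  apply: (invertible_preimage (Z' := Z')) => //; rewrite -?phi_jA;
    try exact/submod_mulset/submod_img.
  - move=> _ [_ [x Ix <-] <-]; have := ext_img (imageP phi Ix).
    rewrite eu => -[_ [b ->] e]; exists b => //.
    by rewrite -e mulrA [v * u]mulrC uv mul1r.
  - move=> _ [_ [x I'x <-] <-].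
    have : prodm (ext I) (ext I') (u * phi x).
      apply: prodm_mul; last exact: (ext_img (imageP phi I'x)).
      by rewrite eu; exists 1; [apply: ringimg1|rewrite mulr1].
    by rewrite -ext_prodm eI ext_ringimg => -[b ->]; exists b.
  - rewrite prodm_mulsetl prodm_mulsetr mulset_mulset -img_prodm eI.
    by rewrite [v * u]mulrC uv mulset1 phi_ringimg.
exists (jB @^-1` Z) => //.
by apply: (mulset_phi_modiso (y := u) iL.1); [exists v|rewrite eL mulsetK].
Qed.

Lemma ext_classeq_ringimg I : invertible jA I ->
  classeq jB (ext I) (ringimg jB) <-> exists2 L, invertible i L & modiso i jA L I.
Proof.
move=> iI; rewrite classeqE; last exact: submod_ringimg.
split; first exact: ext_associate_modiso.
move=> [L iL /(modiso_phi_mulset iL iI) [y yU eI]]; exists y => //.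
by rewrite extmodE eI prodm_mulsetr [ringimg jB]ringimg_range -img_prodm (prodmT_invertible iL).
Qed.
End Main.

Theorem theorem5p3
  (A B TA TB : comPzRingType)
  (i : {rmorphism A -> B}) (i_inj : injective i)
  (jA : {rmorphism A -> TA}) (hTA : is_total_fractions jA)
  (jB : {rmorphism B -> TB}) (hTB : is_total_fractions jB)
  (phi : {rmorphism TA -> TB}) (hphi : forall a, phi (jA a) = jB (i a))
  (Ared : reduced A) (Amin : fin_min_primes A)
  (hnzd : forall a : A, nzd a -> nzd (i a)) :
  (* the map g : C(A) -> C(B), [I] |-> [B phi(I)], is a well-defined
     group homomorphism *)
  (forall I, invertible jA I -> invertible jB (extmod jB phi I)) /\
  (      forall I J, invertible jA I -> invertible jA J -> classeq jA I J ->
        classeq jB (extmod jB phi I) (extmod jB phi J)) /\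
  (      forall I J, invertible jA I -> invertible jA J ->
        seteq (extmod jB phi (prodm I J))
              (prodm (extmod jB phi I) (extmod jB phi J))) /\
  (  (* the map f : C(A,B) -> C(A), [L] |-> [I] with I ≅ L as A-modules,
     is defined on all of C(A,B) ... *)
      forall L, invertible i L -> exists2 I, invertible jA I & modiso i jA L I) /\
  (  (* ... is well defined and injective (exactness at C(A,B)) ... *)
      forall L M I J, invertible i L -> invertible i M ->
        invertible jA I -> invertible jA J ->
        modiso i jA L I -> modiso i jA M J ->
        (classeq i L M <-> classeq jA I J)) /\
  (  (* ... is a group homomorphism ... *)
      forall L M I J K, invertible i L -> invertible i M ->
        invertible jA I -> invertible jA J -> invertible jA K ->
        modiso i jA L I -> modiso i jA M J -> modiso i jA (prodm L M) K ->
        classeq jA K (prodm I J)) /\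
  (  (* ... and im f = ker g (exactness at C(A)) *)
      forall I, invertible jA I ->
        (classeq jB (extmod jB phi I) (ringimg jB) <->
         exists2 L, invertible i L & modiso i jA L I)).
Proof.
split; first exact: (invertible_ext hphi).
split; first by move=> I J _ [sJ _]; apply: classeq_ext.
split; first by move=> I J _ _; apply/seteqE/ext_prodm.
split; first exact: (ex_modiso_invertible i_inj hTA hTB hphi Ared Amin hnzd).
split; first exact: (modiso_classeq i_inj hTA hTB hphi).
split; first exact: (modiso_prodm_classeq i_inj hTA hTB hphi).
exact: (ext_classeq_ringimg i_inj hTA hTB hphi).
Qed.
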